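(* Let $r\ge 2$ and let $L_1$ and $L_2$ be $2$-point lines of $M(K_{r+2})$ such that $L_1\cup L_2$ is a $4$-element circuit. Then the set of flats of $M(K_{r+2})$ that contain $L_1$ or $L_2$ is a proper modular cut of $M(K_{r+2})$. Moreover, the single-element extension of $M(K_{r+2})$ corresponding to this modular cut is isomorphic to the vector matroid, over $\mathbb{R}$ and also over $\mathrm{GF}(3)$, of the matrix $[\,I_{r+1}\mid D_{r+1}\mid v\,]$, where $v=[1,-1,-1,0,\dots,0]^T\in\mathbb{Z}^{r+1}$.
   Context: $M(K_n)$ is the cycle matroid of the complete graph $K_n$. $D_n$ denotes the $n\times\binom n2$ matrix whose columns are all vectors in $\mathbb{Z}^n$ with exactly two nonzero entries, the first (topmost) equal to $1$ and the second equal to $-1$. A modular cut of a matroid $M$ is a set $\mathcal F$ of flats of $M$ such that (i) if $F\in\mathcal F$ and $F'$ is a flat containing $F$ then $F'\in\mathcal F$, and (ii) if $F_1,F_2\in\mathcal F$ and $r(F_1)+r(F_2)=r(F_1\cup F_2)+r(F_1\cap F_2)$ then $F_1\cap F_2\in\mathcal F$. It is proper if it does not contain all flats of $M$. Each modular cut $\mathcal F$ corresponds to a unique single-element extension $N$ of $M$ by an element $e$ in which $\mathcal F$ is exactly the set of flats of $M$ spanning $e$ in $N$. *)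

From HB Require Import structures.
From mathcomp Require Import all_boot all_order all_algebra.
From mathcomp Require Import reals.
Set Implicit Arguments. Unset Strict Implicit. Unset Printing Implicit Defensive.
Import Order.TTheory GRing.Theory Num.Theory.

Definition is_rank (T : finType) (r : {set T} -> nat) : Prop :=
  [/\ forall X : {set T}, r X <= #|X|,
      forall X Y : {set T}, X \subset Y -> r X <= r Y &
      forall X Y : {set T}, r (X :|: Y) + r (X :&: Y) <= r X + r Y].

Definition flat (T : finType) (r : {set T} -> nat) (F : {set T}) : bool :=
  [forall e, (e \notin F) ==> (r F < r (e |: F))].

Definition circuit (T : finType) (r : {set T} -> nat) (C : {set T}) : bool :=
  (r C < #|C|) && [forall D : {set T}, (D \proper C) ==> (r D == #|D|)].

Definition two_point_line (T : finType) (r : {set T} -> nat) (L : {set T}) : bool :=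
  [&& flat r L, r L == 2 & #|L| == 2].

Definition modular_cut (T : finType) (r : {set T} -> nat) (Fc : {set {set T}}) : Prop :=
  [/\ forall F : {set T}, F \in Fc -> flat r F,
      forall F F' : {set T}, F \in Fc -> flat r F' -> F \subset F' -> F' \in Fc &
      forall F1 F2 : {set T}, F1 \in Fc -> F2 \in Fc ->
        r F1 + r F2 = r (F1 :|: F2) + r (F1 :&: F2) -> F1 :&: F2 \in Fc].

Definition proper_modular_cut (T : finType) (r : {set T} -> nat) (Fc : {set {set T}}) : Prop :=
  modular_cut r Fc /\ exists F : {set T}, flat r F && (F \notin Fc).

(** rN (a matroid on [option T], the new element being [None]) is the
    single-element extension of M = (T, r) corresponding to Fc:
    N \ None = M, and Fc is exactly the set of flats of M spanning None in N. *)
Definition extension_of_cut (T : finType) (r : {set T} -> nat) (Fc : {set {set T}})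
    (rN : {set option T} -> nat) : Prop :=
  [/\ is_rank rN,
      forall X : {set T}, rN (Some @: X) = r X &
      forall F : {set T}, flat r F ->
        (F \in Fc) = (rN (None |: Some @: F) == rN (Some @: F))].

Definition matroid_iso (T1 T2 : finType) (r1 : {set T1} -> nat) (r2 : {set T2} -> nat) : Prop :=
  exists f : T1 -> T2, bijective f /\ forall X : {set T1}, r2 (f @: X) = r1 X.

Definition edge (n : nat) := {p : 'I_n * 'I_n | p.1 < p.2}.

Definition eadj (n : nat) (A : {set edge n}) : rel 'I_n :=
  fun x y => [exists e in A, (((val e).1 == x) && ((val e).2 == y))
                           || (((val e).1 == y) && ((val e).2 == x))].

Definition acyclic (n : nat) (A : {set edge n}) : bool :=
  [forall e in A, ~~ connect (eadj (A :\ e)) (val e).1 (val e).2].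

Definition MK (n : nat) (X : {set edge n}) : nat :=
  \max_(A : {set edge n} | (A \subset X) && acyclic A) #|A|.

Definition vrank (K : fieldType) (m : nat) (C : finType) (col : C -> 'cV[K]_m)
    (X : {set C}) : nat :=
  \rank (\sum_(c | c \in X) <<trmx (col c)>>)%MS.

(** Columns of [I_m | D_m | v] with v = [1,-1,-1,0,...,0]^T (over int). *)
Definition colT (m : nat) := ('I_m + (edge m + unit))%type.

Definition unitcol (m : nat) (i : 'I_m) : 'cV[int]_m := (\col_k (k == i)%:R)%R.

Definition vcol (m : nat) : 'cV[int]_m :=
  \col_k (if (k : nat) == 0 then 1%R else if ((k : nat) == 1) || ((k : nat) == 2) then (-1)%R else 0%R).

Definition Icol (m : nat) (c : colT m) : 'cV[int]_m :=
  match c with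
  | inl i => unitcol i
  | inr (inl e) => (unitcol (val e).1 - unitcol (val e).2)%R
  | inr (inr _) => vcol m
  end.

Definition colK (K : fieldType) (m : nat) (c : colT m) : 'cV[K]_m :=
  map_mx (fun z : int => (z%:~R)%R) (Icol c).

(* The proof goes through explicit representations.  If a placement p of the
   vertices of K_n separates vertex cuts by linear functionals, the edge
   vectors p x - p y represent M(K_n): p x - p y lies in the span of an edge
   set A iff x and y are connected in A.  Combinatorially L1 = {ab, cd} and
   L2 = {ac, bd} for a 4-cycle a b d c, and v = (a - b) - (c - d) =
   (a - c) - (b - d) lies in the span of a flat F iff F contains L1 or L2
   (test v against the cuts given by the components of a and d; this is
   where the characteristic matters).  Adding v to the edge vectors therefore
   realises the extension, which shows the cut is a proper modular cut.
   Single-element extensions are determined by their modular cut (a general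
   argument with closures), and labelling a, b, c, d as 0, 1, 2 and the
   origin turns the extended edge vectors into the columns of [I | D | v],
   up to sign. *)

From HB Require Import structures.
From mathcomp Require Import all_boot all_order all_algebra all_fingroup.
From mathcomp Require Import reals.
From mathcomp Require Import zify.
Set Implicit Arguments. Unset Strict Implicit. Unset Printing Implicit Defensive.
Import Order.TTheory GRing.Theory Num.Theory.

Section RowRank.
Variables (K : fieldType) (m : nat) (I : finType) (u : I -> 'rV[K]_m).

Definition span (A : {set I}) := (\sum_(i in A) <<u i>>)%MS.
Definition rk (A : {set I}) := \rank (span A).

Lemma mem_span i (A : {set I}) : i \in A -> (u i <= span A)%MS.
Proof. by move=> iA; apply: (sumsmx_sup i) => //; rewrite genmxE. Qed.

Lemma span_subP (A : {set I}) k (V : 'M_(k, m)) :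
  reflect (forall i, i \in A -> (u i <= V)%MS) (span A <= V)%MS.
Proof. by apply: (iffP sumsmx_subP) => H i /H; rewrite genmxE. Qed.

Lemma span_sub (A B : {set I}) : A \subset B -> (span A <= span B)%MS.
Proof. by move=> AB; apply/span_subP => i /(subsetP AB); apply: mem_span. Qed.

Lemma span_setU (A B : {set I}) : (span (A :|: B) :=: span A + span B)%MS.
Proof.
apply/eqmxP/andP; split; last by rewrite addsmx_sub !span_sub ?subsetUl ?subsetUr.
apply/span_subP => i; rewrite inE => /orP[] /mem_span iS.
  exact: submx_trans iS (addsmxSl _ _).
exact: submx_trans iS (addsmxSr _ _).
Qed.

Lemma rk_setU1 i (A : {set I}) : rk (i |: A) = rk A + ~~ (u i <= span A)%MS.
Proof.
have span1 : (span [set i] :=: u i)%MS.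
  apply/eqmxP/andP; split; last by rewrite mem_span ?set11.
  by apply/span_subP => j /set1P ->.
rewrite /rk span_setU addsmxC (adds_eqmx (eqmx_refl _) span1).
case: (boolP (u i <= span A)%MS) => [uA | uA]; first by rewrite addn0 (addsmx_idPl uA).
have rank_u : \rank (u i) = 1.
  by rewrite rank_rV; case: eqVneq uA => // ->; rewrite sub0mx.
have [le_cap eq_cap] := mxrank_leqif_eq (capmxSr (span A) (u i)).
have cap0 : \rank (span A :&: u i)%MS = 0.
  move: le_cap eq_cap; rewrite rank_u; case: (\rank _) => [|[|]] //= _.
  by move/esym/eqmxP => capE; case/negP: uA; rewrite -capE capmxSl.
by have := mxrank_sum_cap (span A) (u i); rewrite cap0 rank_u addn0 addn1.
Qed.

Lemma rk_card (A : {set I}) : rk A <= #|A|.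
Proof.
rewrite /rk /span -sum1_card.
elim/big_ind2: _ => [|x1 x2 y1 y2 h1 h2|i _]; first by rewrite mxrank0.
  exact: leq_trans (mxrank_adds_leqif x1 y1) (leq_add h1 h2).
by rewrite genmxE rank_leq_row.
Qed.

Lemma rk_mono (A B : {set I}) : A \subset B -> rk A <= rk B.
Proof. by move=> AB; apply/mxrankS/span_sub. Qed.

Lemma rk_submod (A B : {set I}) : rk (A :|: B) + rk (A :&: B) <= rk A + rk B.
Proof.
rewrite /rk span_setU -(mxrank_sum_cap (span A) (span B)) leq_add2l.
by apply: mxrankS; rewrite sub_capmx !span_sub ?subsetIl ?subsetIr.
Qed.

Lemma rk_is_rank : is_rank rk.
Proof. by split; [exact: rk_card | exact: rk_mono | exact: rk_submod]. Qed.

Lemma rk_setD1 i (A : {set I}) : i \in A -> rk A = rk (A :\ i) + ~~ (u i <= span (A :\ i))%MS.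
Proof. by move=> iA; rewrite -{1}(setD1K iA) rk_setU1. Qed.

Lemma rk_indepP (A : {set I}) :
  reflect (forall i, i \in A -> ~~ (u i <= span (A :\ i))%MS) (rk A == #|A|).
Proof.
apply: (iffP eqP) => [rkA i iA | indep].
  move: rkA (rk_card (A :\ i)); rewrite (rk_setD1 iA) (cardsD1 i A) iA.
  by case: (u i <= _)%MS => //=; rewrite addn0 add1n => ->; rewrite ltnn.
move: {2}#|A| (erefl #|A|) indep => k; elim: k A => [|k IH] A cardA indep.
  by rewrite (cards0_eq cardA) /rk /span big_set0 mxrank0 cards0.
have [i iA] : {i | i \in A} by apply/sigW/set0Pn; rewrite -card_gt0 cardA.
have cardAi : #|A :\ i| = k by move: cardA; rewrite (cardsD1 i A) iA => -[].
have indepAi : forall j, j \in A :\ i -> ~~ (u j <= span ((A :\ i) :\ j))%MS.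
  move=> j /setD1P[ji jA]; apply: contra (indep j jA) => /submx_trans; apply.
  exact/span_sub/setSD/subD1set.
by rewrite (rk_setD1 iA) (indep i iA) (IH _ cardAi indepAi) cardA cardAi addn1.
Qed.

Lemma basis_exists (A : {set I}) :
  exists B : {set I}, [/\ B \subset A, rk B = #|B| & rk B = rk A].
Proof.
pose P (B : {set I}) := (B \subset A) && (rk B == #|B|).
have P0 : P set0 by rewrite /P sub0set /rk /span big_set0 mxrank0 cards0.
case: (@arg_maxnP _ set0 P (fun B => #|B|) P0) => B /andP[BA /eqP rkB] Bmax.
exists B; split => //; apply/eqP; rewrite eqn_leq rk_mono //=.
apply/mxrankS/span_subP => i iA; apply/negPn/negP => iB.
have iNB : i \notin B by apply: contra iB; apply: mem_span.
have := Bmax (i |: B); rewrite /P subUset sub1set iA BA rk_setU1 rkB iB cardsU1 iNB.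
by rewrite addn1 add1n eqxx => /(_ isT) /=; rewrite ltnn.
Qed.

Lemma rk_modular_cap (A B : {set I}) : rk A + rk B = rk (A :|: B) + rk (A :&: B) ->
  (span A :&: span B <= span (A :&: B))%MS.
Proof.
move=> modAB; have sub_cap : (span (A :&: B) <= span A :&: span B)%MS.
  by rewrite sub_capmx !span_sub ?subsetIl ?subsetIr.
case: (mxrank_leqif_sup sub_cap) => _ <-; apply/eqP.
by move: modAB; rewrite /rk -(mxrank_sum_cap (span A) (span B)) span_setU => /addnI.
Qed.
End RowRank.

Section RankFunction.
Variables (T : finType) (r : {set T} -> nat).
Hypothesis rank_r : is_rank r.

Let rank_mono (X Y : {set T}) : X \subset Y -> r X <= r Y.
Proof. by case: rank_r => _ + _; apply. Qed.

Let rank_submod (X Y : {set T}) : r (X :|: Y) + r (X :&: Y) <= r X + r Y.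
Proof. by case: rank_r. Qed.

Lemma flat_setI (F1 F2 : {set T}) : flat r F1 -> flat r F2 -> flat r (F1 :&: F2).
Proof.
suff flatI (G1 G2 : {set T}) e : flat r G1 -> e \notin G1 ->
    r (G1 :&: G2) < r (e |: G1 :&: G2).
  move=> fl1 fl2; apply/forallP => e; apply/implyP; rewrite inE negb_and.
  case/orP => [eF1 | eF2]; first exact: flatI.
  by rewrite setIC; apply: flatI.
move=> /forallP/(_ e) fl eG; rewrite eG /= in fl.
have := rank_submod G1 (e |: G1 :&: G2).
have -> : G1 :|: (e |: G1 :&: G2) = e |: G1 by rewrite setUCA (setUidPl (subsetIl _ _)).
have -> : G1 :&: (e |: G1 :&: G2) = G1 :&: G2.
  rewrite setIUr (setIidPr (subsetIl _ _)) (setIC G1 [set e]).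
  by rewrite (disjoint_setI0 _) ?set0U // disjoints1.
lia.
Qed.

Definition closure (X : {set T}) := [set e | r (e |: X) == r X].

Lemma sub_closure (X : {set T}) : X \subset closure X.
Proof. by apply/subsetP => e eX; rewrite inE (setUidPr _) // sub1set. Qed.

Lemma rank_closure (X : {set T}) : r (closure X) = r X.
Proof.
suff rkU (s : seq T) : all [in closure X] s -> r (X :|: [set:: s]) = r X.
  have := rkU (enum (closure X)); rewrite set_enum (setUidPr (sub_closure X)).
  by apply; apply/allP => x; rewrite mem_enum.
elim: s => [|z s IH] /=; first by rewrite set_nil setU0.
case/andP; rewrite inE => /eqP rk_zX /IH rkY; rewrite set_cons setUCA.
apply/eqP; rewrite eqn_leq -{2}rkY [r _ <= r (z |: _)]rank_mono ?subsetUr // andbT.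
have := rank_submod (z |: X) (X :|: [set:: s]).
have -> : (z |: X) :|: (X :|: [set:: s]) = z |: (X :|: [set:: s]).
  by rewrite setUA -(setUA [set z]) setUid -setUA.
have : r X <= r ((z |: X) :&: (X :|: [set:: s])) by rewrite rank_mono // subsetI subsetUr subsetUl.
lia.
Qed.

Lemma flat_closure (X : {set T}) : flat r (closure X).
Proof.
apply/forallP => e; apply/implyP; rewrite inE rank_closure => rk_eX.
have : r X <= r (e |: X) by rewrite rank_mono ?subsetUr.
have : r (e |: X) <= r (e |: closure X) by rewrite rank_mono ?setUS ?sub_closure.
move: rk_eX; lia.
Qed.
End RankFunction.

Section Extension.
Variables (T : finType) (r : {set T} -> nat) (rho : {set option T} -> nat).
Hypotheses (rank_rho : is_rank rho) (rho_r : forall X : {set T}, rho (Some @: X) = r X).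

Lemma ext_rank_bounds (X : {set T}) : r X <= rho (None |: Some @: X) <= r X + 1.
Proof.
case: rank_rho => card_rho mono_rho submod_rho; rewrite -rho_r mono_rho ?subsetUr //=.
have := card_rho [set None]; rewrite cards1 => rho_None.
apply: leq_trans (leq_addr (rho ([set None] :&: Some @: X)) _) _.
by apply: leq_trans (submod_rho _ _) _; rewrite addnC leq_add2l.
Qed.

Lemma ext_rank_closure (X F : {set T}) : X \subset F -> r X = r F ->
  rho (None |: Some @: X) = rho (None |: Some @: F).
Proof.
case: rank_rho => _ mono_rho submod_rho XF rXF.
have XF' : Some @: X \subset Some @: F by apply: imsetS.
apply/eqP; rewrite eqn_leq mono_rho ?setUS //=.
have := submod_rho (None |: Some @: X) (Some @: F).
rewrite -setUA (setUidPr XF') setIUl (setIidPl XF').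
have -> : [set None] :&: Some @: F = set0.
  by apply/setP => y; rewrite !inE; case: eqP => // ->; apply/imsetP => -[].
by rewrite set0U !rho_r rXF leq_add2r.
Qed.
End Extension.

Lemma option_set_split (T : finType) (Y : {set option T}) :
  let X := [set e | Some e \in Y] in
  Y = if None \in Y then None |: Some @: X else Some @: X.
Proof.
apply/setP => -[e|]; case: ifP => NY; rewrite ?inE ?NY ?orbF //=.
- by rewrite (mem_imset _ _ Some_inj) inE.
- by rewrite (mem_imset _ _ Some_inj) inE.
- by apply/esym/imsetP => -[].
Qed.

Lemma extension_unique (T : finType) (r : {set T} -> nat) (Fc : {set {set T}})
    (rN1 rN2 : {set option T} -> nat) : is_rank r ->
  extension_of_cut r Fc rN1 -> extension_of_cut r Fc rN2 -> rN1 =1 rN2.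
Proof.
move=> rank_r [rank1 r1 cut1] [rank2 r2 cut2] Y.
rewrite (option_set_split Y); case: ifP => _; last by rewrite r1 r2.
set X := [set e | _]; set F := closure r X.
have [XF rXF] : X \subset F /\ r X = r F by rewrite /F rank_closure ?sub_closure.
rewrite (ext_rank_closure rank1 r1 XF rXF) (ext_rank_closure rank2 r2 XF rXF).
have := cut1 F (flat_closure rank_r X); rewrite (cut2 F (flat_closure rank_r X)) r1 r2.
have := ext_rank_bounds rank1 r1 F; have := ext_rank_bounds rank2 r2 F; lia.
Qed.

Definition joins n (e : edge n) (x y : 'I_n) : bool :=
  (((val e).1 == x) && ((val e).2 == y)) || (((val e).1 == y) && ((val e).2 == x)).

Definition endpoint n (e : edge n) (x : 'I_n) : bool := ((val e).1 == x) || ((val e).2 == x).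

Section Edges.
Variable n : nat.
Implicit Types (e f : edge n) (x y : 'I_n) (A : {set edge n}).

Lemma joins_sym e x y : joins e x y = joins e y x.
Proof. by rewrite /joins orbC. Qed.

Lemma joins_self e : joins e (val e).1 (val e).2.
Proof. by rewrite /joins !eqxx. Qed.

Lemma joins_neq e x y : joins e x y -> x != y.
Proof.
case: e => [[a b] /= ab]; rewrite /joins /=.
by case/orP => /andP[/eqP <- /eqP <-]; apply: contraTneq ab => ->; rewrite ltnn.
Qed.

Lemma joins_eq e x y x' y' : joins e x y -> joins e x' y' ->
  ((x == x') && (y == y')) || ((x == y') && (y == x')).
Proof.
by rewrite /joins => /orP[] /andP[/eqP <- /eqP <-] /orP[] /andP[/eqP <- /eqP <-];
  rewrite !eqxx ?orbT.
Qed.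

Lemma edge_eq e f x y : joins e x y -> joins f x y -> e = f.
Proof.
case: e f => [[a b] ab] [[a' b'] ab']; rewrite /joins /=.
case/orP => /andP[/eqP <- /eqP <-] /orP[] /andP[/eqP ea /eqP eb]; subst;
  by [apply: val_inj | move: (ltn_trans ab ab'); rewrite ltnn].
Qed.

Lemma exists_edge x y : x != y -> exists e, joins e x y.
Proof.
move=> neq_xy; case: (ltngtP x y) => [xy | yx | /val_inj eq_xy].
- by exists (exist _ (x, y) xy); rewrite /joins /= !eqxx.
- by exists (exist _ (y, x) yx); rewrite /joins /= !eqxx orbT.
- by rewrite eq_xy eqxx in neq_xy.
Qed.

Lemma endpointE e x y z : joins e x y -> endpoint e z = (z == x) || (z == y).
Proof.
by rewrite /endpoint ![_ == z]eq_sym => /orP[] /andP[/eqP-> /eqP->]; rewrite // orbC.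
Qed.

Lemma endpoint_joins e x : endpoint e x -> exists y, joins e x y.
Proof.
rewrite /endpoint => /orP[] /eqP <-; [exists (val e).2 | exists (val e).1].
  exact: joins_self.
by rewrite joins_sym joins_self.
Qed.

Lemma endpoints_joins e x y : endpoint e x -> endpoint e y -> x != y -> joins e x y.
Proof.
rewrite !(endpointE _ (joins_self e)) => /orP[] /eqP-> /orP[] /eqP->;
  by rewrite ?eqxx ?joins_self // joins_sym joins_self.
Qed.

Lemma joins_of_endpoints e x y : (forall z, endpoint e z -> (z == x) || (z == y)) -> joins e x y.
Proof.
have [e1 e2] : endpoint e (val e).1 /\ endpoint e (val e).2 by rewrite /endpoint !eqxx orbT.
move=> ends; have neq12 := joins_neq (joins_self e); have e12 := joins_self e.
case/orP: (ends _ e1) => /eqP E1; case/orP: (ends _ e2) => /eqP E2;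
  by move: e12 neq12; rewrite E1 E2 ?eqxx // => e_yx _; rewrite // joins_sym.
Qed.

Lemma eadjP A x y : reflect (exists2 e, e \in A & joins e x y) (eadj A x y).
Proof. exact: (iffP exists_inP). Qed.

Lemma eadj_sym A : symmetric (eadj A).
Proof. by move=> x y; apply/eadjP/eadjP => -[e eA]; exists e; rewrite // joins_sym. Qed.

Lemma connect_joins A e x y : joins e x y ->
  connect (eadj A) x y = connect (eadj A) (val e).1 (val e).2.
Proof.
by case/orP => /andP[/eqP <- /eqP <-] //; rewrite (sym_connect_sym (@eadj_sym A)).
Qed.

Lemma connect_first_edge A x y : connect (eadj A) x y -> x != y ->
  exists2 e, e \in A & endpoint e x.
Proof.
case/connectP => [[|z s]] /=; first by move=> _ ->; rewrite eqxx.
case/andP => /eadjP[e eA exz] _ _ _; exists e => //.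
by rewrite (endpointE _ exz) eqxx.
Qed.

Lemma edge_between f e1 e2 : f != e1 -> f != e2 ->
  (forall x, endpoint f x -> endpoint e1 x || endpoint e2 x) ->
  exists a c, [/\ endpoint e1 a, endpoint e2 c & joins f a c].
Proof.
move=> fe1 fe2 cover; have fxy := joins_self f.
set x := (val f).1 in fxy *; set y := (val f).2 in fxy *.
have [fx fy] : endpoint f x /\ endpoint f y by rewrite !(endpointE _ fxy) !eqxx orbT.
have not_both e : f != e -> endpoint e x -> endpoint e y -> False.
  move=> fe ex ey; have := edge_eq fxy (endpoints_joins ex ey (joins_neq fxy)).
  by move/eqP; rewrite (negbTE fe).
case/orP: (cover x fx) => [e1x | e2x]; case/orP: (cover y fy) => [e1y | e2y].
- by case: (not_both e1).
- by exists x, y.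
- by exists y, x; rewrite joins_sym.
- by case: (not_both e2).
Qed.
End Edges.

(** [p] places the vertices of [K_n] in [K^m] so that every vertex set [S]
    is cut out by a linear functional [psi]; the edge vectors [p x - p y]
    then represent the cycle matroid [M(K_n)]. *)
Definition separates_cuts (K : fieldType) n m (p : 'I_n -> 'rV[K]_m) : Prop :=
  forall S : {set 'I_n}, exists psi : 'cV[K]_m, exists2 s : K, (s != 0)%R &
    forall x y, ((p x - p y) *m psi = (s * ((x \in S)%:R - (y \in S)%:R))%:M)%R.

Definition line_cut n (L1 L2 : {set edge n}) : {set {set edge n}} :=
  [set F | flat (@MK n) F && ((L1 \subset F) || (L2 \subset F))].

Section GraphicMatroid.
Variables (K : fieldType) (n m : nat) (p : 'I_n -> 'rV[K]_m).
Hypothesis p_cuts : separates_cuts p.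
Local Open Scope ring_scope.
Implicit Types (e f : edge n) (x y : 'I_n) (A F : {set edge n}).

Definition ecol e : 'rV[K]_m := p (val e).1 - p (val e).2.

Lemma ecol_joins e x y : joins e x y -> ecol e = p x - p y \/ ecol e = - (p x - p y).
Proof. by rewrite /ecol => /orP[] /andP[/eqP-> /eqP->]; [left | right; rewrite opprB]. Qed.

Lemma connect_span A x y : connect (eadj A) x y -> (p x - p y <= span ecol A)%MS.
Proof.
case/connectP => s; elim: s x => [|z s IH] x /=; first by move=> _ ->; rewrite subrr sub0mx.
case/andP => /eadjP[e eA exz] /IH{}IH /IH{}IH.
rewrite -[p x](subrK (p z)) -addrA addmx_sub //.
have [<- | ecolN] := ecol_joins exz; first exact: mem_span.
by rewrite -[p x - p z]opprK -ecolN eqmx_opp mem_span.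
Qed.

Lemma span_cut_kill A (S : {set 'I_n}) psi s (w : 'rV[K]_m) :
  (forall x y, (p x - p y) *m psi = (s * ((x \in S)%:R - (y \in S)%:R))%:M) ->
  (forall e, e \in A -> ((val e).1 \in S) = ((val e).2 \in S)) ->
  (w <= span ecol A)%MS -> w *m psi = 0.
Proof.
move=> psiS closedS /submxP[D ->]; rewrite -mulmxA.
suff -> : span ecol A *m psi = 0 by rewrite mulmx0.
apply/eqP; rewrite -sub_kermx; apply/span_subP => e eA.
by rewrite sub_kermx /ecol psiS closedS // subrr mulr0 raddf0.
Qed.

Lemma component_closed A x e : e \in A ->
  ((val e).1 \in [set y | connect (eadj A) x y]) = ((val e).2 \in [set y | connect (eadj A) x y]).
Proof.
move=> eA; rewrite !inE.
have e12 : eadj A (val e).1 (val e).2 by apply/eadjP; exists e; rewrite ?joins_self.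
apply/idP/idP => [/connect_trans | ]; first by apply; apply: connect1.
by move/connect_trans; apply; apply: connect1; rewrite eadj_sym.
Qed.

Lemma span_connect A x y : (p x - p y <= span ecol A)%MS = connect (eadj A) x y.
Proof.
apply/idP/idP => [xy_span | ]; last exact: connect_span.
apply/negPn/negP => nxy; have [psi [s s0 psiS]] := p_cuts [set z | connect (eadj A) x z].
have := span_cut_kill psiS (@component_closed A x) xy_span; rewrite psiS !inE connect0.
by rewrite (negbTE nxy) subr0 mulr1 -scalemx1 => /eqP; rewrite scaler_eq0 (negbTE s0) oner_eq0.
Qed.

Lemma ecol_span A e : (ecol e <= span ecol A)%MS = connect (eadj A) (val e).1 (val e).2.
Proof. exact: span_connect. Qed.

Lemma acyclic_indep A : acyclic A = (rk ecol A == #|A|).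
Proof.
apply/forall_inP/rk_indepP => [acyc e eA | indep e eA]; first by rewrite ecol_span acyc.
by rewrite -ecol_span indep.
Qed.

Lemma MK_rk A : MK A = rk ecol A.
Proof.
apply/eqP; rewrite eqn_leq; apply/andP; split.
  apply/bigmax_leqP => B /andP[BA]; rewrite acyclic_indep => /eqP <-; exact: rk_mono.
have [B [BA rkB <-]] := basis_exists ecol A.
by rewrite rkB; apply: leq_bigmax_cond; rewrite BA acyclic_indep rkB eqxx.
Qed.

Lemma MK_is_rank : is_rank (@MK n).
Proof.
have [card_rk mono_rk submod_rk] := rk_is_rank ecol.
by split=> [X | X Y XY | X Y]; rewrite !MK_rk; [apply: card_rk | apply: mono_rk | apply: submod_rk].
Qed.

Lemma flat_spanP F : reflect (forall e, (ecol e <= span ecol F)%MS -> e \in F) (flat (@MK n) F).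
Proof.
apply: (iffP forallP) => [fl e e_span | closedF e].
  apply/negPn/negP => eF; have := fl e; rewrite eF /= !MK_rk rk_setU1 e_span.
  by rewrite addn0 ltnn.
apply/implyP => eF; have e_out : ~~ (ecol e <= span ecol F)%MS by apply: contra eF; apply: closedF.
by rewrite !MK_rk rk_setU1 e_out addn1 ltnSn.
Qed.

Lemma flat_connect F e : flat (@MK n) F -> connect (eadj F) (val e).1 (val e).2 -> e \in F.
Proof. by move=> /flat_spanP closedF conn; apply: closedF; rewrite ecol_span. Qed.

Lemma flat_set0 : flat (@MK n) set0.
Proof.
apply/flat_spanP => e; rewrite ecol_span => conn.
by have [f] := connect_first_edge conn (joins_neq (joins_self e)); rewrite inE.
Qed.

(** The two edges of a 2-point line have no common endpoint: otherwise the
    third side of their triangle would lie in the line. *)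
Lemma line_disjoint L e e' x : two_point_line (@MK n) L ->
  e \in L -> e' \in L -> e != e' -> endpoint e x -> endpoint e' x -> False.
Proof.
case/and3P => flL _ /eqP cardL eL e'L ee' /endpoint_joins[y exy] /endpoint_joins[z exz].
have yz : y != z by apply: contraNneq ee' => eq_yz; apply/eqP/(edge_eq exy); rewrite eq_yz.
have [g gyz] := exists_edge yz.
have gL : g \in L.
  apply: flat_connect flL _; rewrite -(connect_joins _ gyz).
  apply: (@connect_trans _ _ x); apply/connect1/eadjP; [exists e | exists e'] => //.
  by rewrite joins_sym.
have ge : g != e.
  apply: (contraNneq _ (_ : ~~ endpoint e z)) => [<-|].
    by rewrite (endpointE _ gyz) eqxx orbT.
  by rewrite (endpointE _ exy) negb_or eq_sym (joins_neq exz) eq_sym yz.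
have ge' : g != e'.
  apply: (contraNneq _ (_ : ~~ endpoint e' y)) => [<-|]; first by rewrite (endpointE _ gyz) eqxx.
  by rewrite (endpointE _ exz) negb_or eq_sym (joins_neq exy) yz.
have : (#|g |: [set e; e']| <= #|L|)%N.
  by apply: subset_leq_card; apply/subsetP => h; rewrite !inE; case/orP => [|/orP[]] /eqP->.
by rewrite cardL cardsU1 cards2 !inE ee' negb_or ge ge'.
Qed.

Lemma circuit_cover C g x : circuit (@MK n) C -> g \in C -> endpoint g x ->
  exists2 h, h \in C :\ g & endpoint h x.
Proof.
case/andP => dep /forall_inP minC gC /endpoint_joins[y gxy].
have /eqP indep := minC _ (properD1 gC).
have g_span : (ecol g <= span ecol (C :\ g))%MS.
  apply/negPn/negP => g_out; move: dep; rewrite MK_rk (rk_setD1 _ gC) g_out -MK_rk indep.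
  by rewrite (cardsD1 g C) gC addn1 ltnn.
apply: connect_first_edge (joins_neq gxy).
by rewrite (connect_joins _ gxy) -ecol_span.
Qed.

Lemma circuit_line_cover L1 L2 f x : two_point_line (@MK n) L2 ->
  circuit (@MK n) (L1 :|: L2) -> f \in L2 -> endpoint f x -> exists2 h, h \in L1 & endpoint h x.
Proof.
move=> line2 circ fL2 fx; have fC : f \in L1 :|: L2 by rewrite inE fL2 orbT.
have [h /setD1P[hf]] := circuit_cover circ fC fx; rewrite inE => /orP[hL1 | hL2] hx.
  by exists h.
by case: (line_disjoint line2 hL2 fL2 hf hx fx).
Qed.

Lemma four_cycle_config L1 L2 :
  two_point_line (@MK n) L1 -> two_point_line (@MK n) L2 ->
  circuit (@MK n) (L1 :|: L2) -> #|L1 :|: L2| = 4 ->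
  exists a b c d : 'I_n, exists e1 e2 e3 e4 : edge n,
  [/\ uniq [:: a; b; c; d], L1 = [set e1; e2], L2 = [set e3; e4] &
      [/\ joins e1 a b, joins e2 c d, joins e3 a c & joins e4 b d]].
Proof.
move=> line1 line2 circ card4.
have /and3P[_ _ /cards2P[e1 [e2 [ne12 defL1]]]] := line1.
have /and3P[_ _ /cards2P[f1 [f2 [nf12 defL2]]]] := line2.
have [e1L e2L] : e1 \in L1 /\ e2 \in L1 by rewrite defL1 !inE !eqxx orbT.
have [f1L f2L] : f1 \in L2 /\ f2 \in L2 by rewrite defL2 !inE !eqxx orbT.
have disjL : L1 :&: L2 = set0.
  apply/eqP; rewrite -cards_eq0; move: (cardsUI L1 L2).
  by rewrite card4 {2}defL1 {2}defL2 !cards2 ne12 nf12; lia.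
have notL1 f : f \in L2 -> f \notin L1.
  by move=> fL2; apply/negP => fL1; move: (in_set0 f); rewrite -disjL inE fL1 fL2.
have cover f x : f \in L2 -> endpoint f x -> endpoint e1 x || endpoint e2 x.
  move=> fL2 /(circuit_line_cover line2 circ fL2)[h].
  by rewrite defL1 !inE => /orP[] /eqP-> ->; rewrite ?orbT.
have [ne1 ne2] : f1 != e1 /\ f1 != e2.
  by split; apply: contraNneq (notL1 _ f1L) => ->.
have [a [c [e1a e2c f1ac]]] := edge_between ne1 ne2 (cover f1 ^~ f1L).
have [b e1ab] := endpoint_joins e1a; have [d e2cd] := endpoint_joins e2c.
have sep x y : endpoint e1 x -> endpoint e2 y -> x != y.
  by move=> e1x e2y; apply/eqP => xy; apply: (line_disjoint line1 e1L e2L ne12 e1x); rewrite xy.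
have f2_ends x : endpoint f2 x -> (x == b) || (x == d).
  move=> f2x; have notf1 := line_disjoint line2 f1L f2L nf12 _ f2x.
  have [f1a f1c] : endpoint f1 a /\ endpoint f1 c by rewrite !(endpointE _ f1ac) !eqxx orbT.
  case/orP: (cover f2 x f2L f2x); [rewrite (endpointE _ e1ab) | rewrite (endpointE _ e2cd)];
    by case/orP => /eqP xE; subst x; rewrite ?eqxx ?orbT //;
       first [case: (notf1 f1a) | case: (notf1 f1c)].
exists a, b, c, d, e1, e2, f1, f2; split; rewrite ?(joins_of_endpoints f2_ends) //.
have [e1b e2d] : endpoint e1 b /\ endpoint e2 d.
  by rewrite (endpointE _ e1ab) (endpointE _ e2cd) !eqxx !orbT.
by rewrite /= !inE !negb_or (joins_neq e1ab) (joins_neq e2cd) !sep.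
Qed.

Lemma flat_joins F e x y : flat (@MK n) F -> joins e x y -> connect (eadj F) x y -> e \in F.
Proof. by move=> flF exy; rewrite (connect_joins _ exy); apply: flat_connect. Qed.

Lemma joins_span F e x y : e \in F -> joins e x y -> (p x - p y <= span ecol F)%MS.
Proof. by move=> eF exy; apply/connect_span/connect1/eadjP; exists e. Qed.

Section FourCycle.
Hypothesis two_neq0 : (2%:R : K) != 0.
Variables (a b c d : 'I_n) (e1 e2 e3 e4 : edge n) (L1 L2 : {set edge n}).
Hypotheses (defL1 : L1 = [set e1; e2]) (defL2 : L2 = [set e3; e4]).
Hypotheses (e1ab : joins e1 a b) (e2cd : joins e2 c d) (e3ac : joins e3 a c) (e4bd : joins e4 b d).

Definition vnew : 'rV[K]_m := (p a - p b) - (p c - p d).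

Lemma vnew_swap : vnew = (p a - p c) - (p b - p d).
Proof. by rewrite /vnew !opprB addrACA [RHS]addrACA [- p b - p c]addrC. Qed.

Lemma bool_diff_eq (al be ga de : bool) :
  (al%:R - be%:R) - (ga%:R - de%:R) = 0 :> K -> (al + de = be + ga)%N.
Proof.
have two : (1 + 1 : K) != 0 by rewrite -mulr2n.
case: al be ga de => [] [] [] [] //=;
  rewrite ?mulr1n ?mulr0n ?subr0 ?sub0r ?opprK ?subrr ?opprB ?addrK ?subrK ?sub0r ?oppr0;
  move/eqP; rewrite ?add0r ?addr0 -?opprD ?oppr_eq0 ?oner_eq0 ?(negbTE two) //.
Qed.

Lemma vnew_cut F (S : {set 'I_n}) :
  (forall e, e \in F -> ((val e).1 \in S) = ((val e).2 \in S)) ->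
  (vnew <= span ecol F)%MS -> ((a \in S) + (d \in S) = (b \in S) + (c \in S))%N.
Proof.
move=> closedS v_span; have [psi [s s0 psiS]] := p_cuts S.
have := span_cut_kill psiS closedS v_span; rewrite /vnew mulmxBl !psiS.
move/matrixP/(_ ord0 ord0); rewrite !mxE eqxx !mulr1n -mulrBr => /eqP.
rewrite mulf_eq0 (negbTE s0) => /eqP.
exact: bool_diff_eq.
Qed.

Lemma lines_span F : (L1 \subset F) || (L2 \subset F) -> (vnew <= span ecol F)%MS.
Proof.
case/orP => /subsetP LF.
  have [e1F e2F] : e1 \in F /\ e2 \in F by split; apply: LF; rewrite defL1 !inE eqxx ?orbT.
  by rewrite /vnew addmx_sub ?eqmx_opp ?(joins_span e1F e1ab) ?(joins_span e2F e2cd).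
have [e3F e4F] : e3 \in F /\ e4 \in F by split; apply: LF; rewrite defL2 !inE eqxx ?orbT.
by rewrite vnew_swap addmx_sub ?eqmx_opp ?(joins_span e3F e3ac) ?(joins_span e4F e4bd).
Qed.

(** Conversely, comparing the components of [a] and [d] in [F] shows that
    [F] joins [a, b] and [c, d], or [a, c] and [b, d]. *)
Lemma span_lines F : flat (@MK n) F -> (vnew <= span ecol F)%MS -> (L1 \subset F) || (L2 \subset F).
Proof.
move=> flF v_span; set conn := connect (eadj F).
have conn_sym x y : conn x y = conn y x by rewrite /conn (sym_connect_sym (@eadj_sym _ F)).
have L1F : conn a b -> conn c d -> L1 \subset F.
  by move=> ab cd; rewrite defL1 subUset !sub1set (flat_joins flF e1ab) ?(flat_joins flF e2cd).
have L2F : conn a c -> conn b d -> L2 \subset F.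
  by move=> ac bd; rewrite defL2 subUset !sub1set (flat_joins flF e3ac) ?(flat_joins flF e4bd).
have := vnew_cut (@component_closed F a) v_span; rewrite !inE connect0 -/conn.
have := vnew_cut (@component_closed F d) v_span; rewrite !inE connect0 -/conn.
rewrite !(conn_sym d).
case ad : (conn a d); case bd : (conn b d); case cd : (conn c d) => //= _.
- by rewrite L1F //; apply: connect_trans ad _; rewrite -/conn conn_sym.
- have -> : conn a b = false by apply: contraFF ad => ab; apply: connect_trans ab bd.
  by case ac : (conn a c) => // _; rewrite L2F ?orbT.
- have -> : conn a c = false by apply: contraFF ad => ac; apply: connect_trans ac cd.
  by case ab : (conn a b) => // _; rewrite L1F.
Qed.

Lemma lines_spanE F : flat (@MK n) F ->
  ((L1 \subset F) || (L2 \subset F)) = (vnew <= span ecol F)%MS.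
Proof. by move=> flF; apply/idP/idP; [apply: lines_span | apply: span_lines]. Qed.

Definition col_ext (o : option (edge n)) : 'rV[K]_m := if o is Some e then ecol e else vnew.
Definition rank_ext : {set option (edge n)} -> nat := rk col_ext.

Lemma span_ext (X : {set edge n}) : span col_ext (Some @: X) = span ecol X.
Proof. by rewrite /span big_imset //= => x y _ _ [->]. Qed.

Lemma rank_ext_Some (X : {set edge n}) : rank_ext (Some @: X) = MK X.
Proof. by rewrite /rank_ext /rk span_ext MK_rk. Qed.

Lemma rank_ext_None (X : {set edge n}) :
  rank_ext (None |: Some @: X) = (MK X + ~~ (vnew <= span ecol X)%MS)%N.
Proof. by rewrite -rank_ext_Some /rank_ext rk_setU1 span_ext. Qed.

Lemma rank_ext_extension : extension_of_cut (@MK n) (line_cut L1 L2) rank_ext.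
Proof.
split; [exact: rk_is_rank | exact: rank_ext_Some | move=> F flF].
rewrite inE flF (lines_spanE flF) rank_ext_None rank_ext_Some.
by case: (vnew <= _)%MS => /=; lia.
Qed.

(** For a modular pair of flats in the cut, the span of their intersection is
    the intersection of their spans, which contains [v]. *)
Lemma line_cut_modular : modular_cut (@MK n) (line_cut L1 L2).
Proof.
split=> [F | F F' | F1 F2]; rewrite !inE.
- by case/andP.
- by case/andP=> _ /orP[] LF flF' FF'; rewrite flF' (subset_trans LF FF') ?orbT.
case/andP=> fl1; rewrite (lines_spanE fl1) => v1; case/andP=> fl2; rewrite (lines_spanE fl2) => v2.
have fl12 := flat_setI MK_is_rank fl1 fl2.
rewrite !MK_rk fl12 (lines_spanE fl12) => /rk_modular_cap; apply: submx_trans.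
by rewrite sub_capmx v1 v2.
Qed.

(** The cut is proper: the empty flat contains neither line. *)
Lemma line_cut_proper : proper_modular_cut (@MK n) (line_cut L1 L2).
Proof.
split; first exact: line_cut_modular.
exists set0; rewrite flat_set0 inE flat_set0 /= !subset0 defL1 defL2.
by rewrite -!cards_eq0 !cards2.
Qed.
End FourCycle.
End GraphicMatroid.

Lemma separates_cuts_perm (K : fieldType) n m (p : 'I_n -> 'rV[K]_m) (sg : {perm 'I_n}) :
  separates_cuts p -> separates_cuts (p \o sg).
Proof.
move=> p_cuts S; have [psi [s s0 psiS]] := p_cuts (sg @: S); exists psi, s => // x y.
by rewrite /= psiS !(mem_imset _ _ (@perm_inj _ sg)).
Qed.

Section StandardPlacement.
Variables (K : fieldType) (m : nat).
Local Open Scope ring_scope.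

Definition phi (y : 'I_m.+1) : 'rV[K]_m :=
  if unlift ord_max y is Some i then delta_mx 0 i else 0.

Lemma phi_lift i : phi (lift ord_max i) = delta_mx 0 i.
Proof. by rewrite /phi liftK. Qed.

Lemma phi_max : phi ord_max = 0.
Proof. by rewrite /phi unlift_none. Qed.

(** A cut [S] is detected by the indicator functional of [S], or of its
    complement when [S] contains the origin vertex [ord_max]. *)
Lemma separates_cuts_phi : separates_cuts phi.
Proof.
move=> S; pose T := if ord_max \in S then ~: S else S.
pose psi : 'cV[K]_m := \col_i (lift ord_max i \in T)%:R.
have psiT y : phi y *m psi = ((y \in T)%:R)%:M.
  case: (unliftP ord_max y) => [i -> | ->]; last first.
    by rewrite phi_max mul0mx /T; case: ifP => maxS; rewrite ?inE ?maxS ?raddf0.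
  by rewrite phi_lift -rowE [LHS]mx11_scalar !mxE.
exists psi, (if ord_max \in S then -1 else 1).
  by case: ifP; rewrite ?oppr_eq0 oner_eq0.
move=> x y; rewrite mulmxBl !psiT -raddfB /T; case: ifP => _; rewrite ?mul1r //.
rewrite !inE mulN1r opprB; congr (_%:M).
by case: (x \in S) (y \in S) => [] []; rewrite /= ?subrr ?subr0 ?sub0r.
Qed.
End StandardPlacement.

Lemma perm_of_uniq (T : finType) (x0 : T) (xs ys : seq T) :
  uniq xs -> uniq ys -> size xs = size ys ->
  exists s : {perm T}, forall i, i < size xs -> s (nth x0 xs i) = nth x0 ys i.
Proof.
elim: xs ys => [|x xs IH] [|y ys] //=; first by exists 1%g.
case/andP => xNxs uxs /andP[yNys uys] [size_eq].
have [s sE] := IH ys uxs uys size_eq.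
exists (s * tperm (s x) y)%g => -[_|k lt_k] /=; rewrite permM ?tpermL //.
rewrite sE // tpermD //.
  by apply: contraNneq xNxs => /esym; rewrite -sE // => /perm_inj <-; rewrite mem_nth.
by apply: contraNneq yNys => ->; rewrite mem_nth // -size_eq.
Qed.

Definition edge_of n (x y : 'I_n) : option (edge n) :=
  if insub (x, y) is Some e then Some e else insub (y, x).

Lemma edge_ofP n (x y : 'I_n) : x != y -> exists2 e, edge_of x y = Some e & joins e x y.
Proof.
move=> neq_xy; rewrite /edge_of; case: insubP => [e _ eE | xy_gt].
  by exists e; rewrite // /joins eE !eqxx.
case: insubP => [e _ eE | yx_gt]; first by exists e; rewrite // /joins eE !eqxx orbT.
by move: xy_gt yx_gt neq_xy => /=; case: ltngtP => // /val_inj ->; rewrite eqxx.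
Qed.

(** Matching the columns of [[I_m | D_m | v]] with the elements of
    [M(K_(m+1))] plus the new element: the vertex labelled [sg x = ord_max]
    plays the role of the origin, [I_m] gives the edges at that vertex and
    [D_m] the other edges. *)
Section ColumnEdges.
Variables (m : nat) (sg : {perm 'I_m.+1}).

Definition col_ends (c : colT m) : 'I_m.+1 * 'I_m.+1 :=
  match c with
  | inl i => (lift ord_max i, ord_max)
  | inr (inl e) => (lift ord_max (val e).1, lift ord_max (val e).2)
  | inr (inr _) => (ord_max, ord_max)
  end.

Definition col_edge (c : colT m) : option (edge m.+1) :=
  if c is inr (inr _) then None else edge_of (sg^-1 (col_ends c).1)%g (sg^-1 (col_ends c).2)%g.

Lemma col_edgeP c : c != inr (inr tt) ->
  exists2 e, col_edge c = Some e & joins e (sg^-1 (col_ends c).1)%g (sg^-1 (col_ends c).2)%g.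
Proof.
move=> c_old; have -> : col_edge c = edge_of (sg^-1 (col_ends c).1)%g (sg^-1 (col_ends c).2)%g.
  by case: c c_old => [|[|[]]].
apply: edge_ofP; rewrite (inj_eq (@perm_inj _ _)); case: c c_old => [i | [e | []]] //= _.
  by rewrite eq_sym neq_lift.
by rewrite (inj_eq (@lift_inj _ _)) (joins_neq (joins_self e)).
Qed.

Lemma col_ends_inj c1 c2 : c1 != inr (inr tt) -> c2 != inr (inr tt) ->
  let: (x1, y1) := col_ends c1 in let: (x2, y2) := col_ends c2 in
  ((x1 == x2) && (y1 == y2)) || ((x1 == y2) && (y1 == x2)) -> c1 = c2.
Proof.
have neq_max (i : 'I_m) : (lift ord_max i == ord_max) = false.
  by rewrite eq_sym (negbTE (neq_lift _ _)).
case: c1 c2 => [i | [e | []]] [j | [f | []]] //= _ _;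
  rewrite ?neq_max ?[ord_max == _]eq_sym ?neq_max ?andbF ?orbF //=.
- by move=> /andP[/eqP/lift_inj -> _].
- rewrite !(inj_eq (@lift_inj _ _)) => /orP[] /andP[/eqP e1 /eqP e2]; congr (inr (inl _)).
    by apply: (edge_eq (joins_self e)); rewrite e1 e2 joins_self.
  by apply: (edge_eq (joins_self e)); rewrite e1 e2 joins_sym joins_self.
Qed.

Lemma col_edge_inj : injective col_edge.
Proof.
move=> c1 c2; case: (eqVneq c1 (inr (inr tt))) => [-> | c1_old];
  case: (eqVneq c2 (inr (inr tt))) => [-> | c2_old] //.
- by have [e ->] := col_edgeP c2_old.
- by have [e ->] := col_edgeP c1_old.
have [e1 -> j1] := col_edgeP c1_old; have [e2 -> j2] := col_edgeP c2_old => -[e12].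
move: j1; rewrite e12 => /(joins_eq j2); rewrite !(inj_eq (@perm_inj _ _)).
have := col_ends_inj c2_old c1_old; case: (col_ends c1) (col_ends c2) => [x1 y1] [x2 y2] /=.
by move=> ends_inj /ends_inj.
Qed.

Lemma col_edge_surj o : exists c, col_edge c = o.
Proof.
case: o => [e|]; last by exists (inr (inr tt)).
pose u := sg (val e).1; pose v := sg (val e).2.
have neq_uv : u != v by rewrite (inj_eq (@perm_inj _ _)) (joins_neq (joins_self e)).
suff [c c_old ends] : exists2 c, c != inr (inr tt) &
    joins e (sg^-1 (col_ends c).1)%g (sg^-1 (col_ends c).2)%g.
  by exists c; have [e' -> e'j] := col_edgeP c_old; rewrite (edge_eq e'j ends).
have uvE : joins e (sg^-1 u)%g (sg^-1 v)%g by rewrite !permK joins_self.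
have vuE : joins e (sg^-1 v)%g (sg^-1 u)%g by rewrite joins_sym.
case: (unliftP ord_max u) (unliftP ord_max v) neq_uv uvE vuE => [i -> | ->] [j -> | ->] //.
- rewrite (inj_eq (@lift_inj _ _)) => /exists_edge[f fij] uvE vuE.
  exists (inr (inl f)) => //=; case/orP: fij => /andP[/eqP-> /eqP->] //.
- by move=> _ uvE _; exists (inl i).
- by move=> _ _ vuE; exists (inl j).
- by rewrite eqxx.
Qed.

Lemma col_edge_bij : bijective col_edge.
Proof.
apply: inj_card_bij col_edge_inj _.
have: #|[set: option (edge m.+1)]| <= #|codom col_edge|.
  apply/subset_leq_card/subsetP => o _.
  by have [c <-] := col_edge_surj o; apply: codom_f.
by rewrite cardsT (card_codom col_edge_inj).
Qed.
End ColumnEdges.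

Section Columns.
Variables (K : fieldType) (r : nat) (sg : {perm 'I_r.+2}) (a b c d : 'I_r.+2).
Hypotheses (sg_a : sg a = 0 :> nat) (sg_b : sg b = 1 :> nat) (sg_c : sg c = 2 :> nat)
  (sg_d : sg d = ord_max).
Local Open Scope ring_scope.

Let p := @phi K r.+1 \o sg.

Lemma phi_entry (y : 'I_r.+2) (j : 'I_r.+1) : @phi K r.+1 y 0 j = ((j : nat) == y)%:R.
Proof.
case: (unliftP ord_max y) => [i -> | ->]; rewrite ?phi_lift ?phi_max !mxE ?lift_max //=.
by rewrite ltn_eqF.
Qed.

Lemma bump_max (k : 'I_r.+1) : bump r.+1 k = k.
Proof. by rewrite /bump leqNgt ltn_ord. Qed.

Lemma genmx_sign (u v : 'rV[K]_r.+1) : u = v \/ u = - v -> <<v>>%MS = <<u>>%MS.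
Proof. by move=> [-> | ->] //; apply/eq_genmx/eqmx_sym/eqmx_opp. Qed.

Lemma column_span (cc : colT r.+1) :
  <<trmx (colK K cc)>>%MS = <<col_ext p a b c d (col_edge sg cc)>>%MS.
Proof.
case: (eqVneq cc (inr (inr tt))) => [-> | cc_old].
  apply: congr1; apply/matrixP => i j; rewrite ord1 /= /vnew /p !mxE /= !phi_entry.
  rewrite sg_a sg_b sg_c sg_d.
  rewrite (ltn_eqF (ltn_ord j)) subr0.
  by case: j => -[|[|[|j]]] //= _; rewrite ?subr0 ?sub0r ?mulr1n ?mulr0n.
have [e -> ej] := col_edgeP sg cc_old; apply: genmx_sign => /=.
have [-> | ->] := ecol_joins p ej; [left | right; congr (- _)];
  apply/matrixP => i j; rewrite ord1 /p /= !permKV !mxE !phi_entry;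
  case: cc cc_old {ej} => [k | [f | []]] //= _;
  by rewrite ?bump_max !mxE ?intrB ?natz ?(ltn_eqF (ltn_ord j)) ?subr0.
Qed.

Lemma vrank_colK (f : option (edge r.+2) -> colT r.+1) :
  cancel f (col_edge sg) -> cancel (col_edge sg) f ->
  forall Y : {set option (edge r.+2)}, vrank (@colK K r.+1) (f @: Y) = rank_ext p a b c d Y.
Proof.
move=> fK edgeK Y; rewrite /vrank /rank_ext /rk /span big_imset /=; last first.
  by move=> x y _ _; apply: (can_inj fK).
by congr (\rank _); apply: eq_bigr => o _; rewrite column_span fK.
Qed.
End Columns.

Lemma labels_uniq r : 2 <= r -> uniq [:: ord0; inord 1; inord 2; @ord_max r.+1].
Proof.
move=> r_ge2; rewrite /= !inE -!val_eqE /= !inordK ?ltnS // ?(ltnW r_ge2) //.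
by apply/and4P; split => //; apply/eqP; lia.
Qed.

Lemma line_cut_extension_iso (K : fieldType) r (a b c d : 'I_r.+2)
    (e1 e2 e3 e4 : edge r.+2) (L1 L2 : {set edge r.+2}) (rN : {set option (edge r.+2)} -> nat) :
  (2%:R : K)%R != 0%R -> 2 <= r -> uniq [:: a; b; c; d] ->
  L1 = [set e1; e2] -> L2 = [set e3; e4] ->
  joins e1 a b -> joins e2 c d -> joins e3 a c -> joins e4 b d ->
  extension_of_cut (@MK r.+2) (line_cut L1 L2) rN -> matroid_iso rN (vrank (@colK K r.+1)).
Proof.
move=> two r_ge2 abcd defL1 defL2 e1ab e2cd e3ac e4bd ext_rN.
have [sg sgE] := perm_of_uniq a abcd (labels_uniq r_ge2) erefl.
have sg_a : sg a = 0 :> nat by rewrite (sgE 0).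
have sg_b : sg b = 1 :> nat by rewrite (sgE 1) //= inordK.
have sg_c : sg c = 2 :> nat by rewrite (sgE 2) //= inordK // !ltnS (ltnW r_ge2).
have sg_d : sg d = ord_max by rewrite (sgE 3).
have cuts := separates_cuts_perm sg (@separates_cuts_phi K r.+1).
have ext := rank_ext_extension cuts two defL1 defL2 e1ab e2cd e3ac e4bd.
have [f edgeK fK] := col_edge_bij sg; exists f; split; first by exists (col_edge sg).
move=> Y; rewrite (vrank_colK _ sg_a sg_b sg_c sg_d fK edgeK).
exact/esym/(extension_unique (MK_is_rank cuts) ext_rN ext).
Qed.

Theorem proposition3p3 (r : nat) (L1 L2 : {set edge r.+2}) :
  2 <= r ->
  two_point_line (@MK r.+2) L1 ->
  two_point_line (@MK r.+2) L2 ->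
  circuit (@MK r.+2) (L1 :|: L2) ->
  #|L1 :|: L2| = 4 ->
  let Fc := [set F | flat (@MK r.+2) F && ((L1 \subset F) || (L2 \subset F))] in
  proper_modular_cut (@MK r.+2) Fc /\
  (exists rN, extension_of_cut (@MK r.+2) Fc rN) /\
  (forall rN, extension_of_cut (@MK r.+2) Fc rN ->
     (forall R : realType, matroid_iso rN (vrank (@colK R r.+1))) /\
     matroid_iso rN (vrank (@colK 'F_3 r.+1))).
Proof.
move=> r_ge2 line1 line2 circ card4 Fc.
have cuts3 := @separates_cuts_phi 'F_3 r.+1; have two3 : (2%:R : 'F_3)%R != 0%R by [].
have [a [b [c [d [e1 [e2 [e3 [e4 [abcd defL1 defL2 [e1ab e2cd e3ac e4bd]]]]]]]]]] :=
  four_cycle_config cuts3 line1 line2 circ card4.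
split; first exact: (line_cut_proper cuts3 two3 defL1 defL2 e1ab e2cd e3ac e4bd).
split; first by eexists; exact: (rank_ext_extension cuts3 two3 defL1 defL2 e1ab e2cd e3ac e4bd).
move=> rN ext_rN; have iso K two := @line_cut_extension_iso K r a b c d e1 e2 e3 e4 L1 L2 rN
  two r_ge2 abcd defL1 defL2 e1ab e2cd e3ac e4bd ext_rN.
by split; [move=> R; apply: iso; rewrite pnatr_eq0 | exact: iso].
Qed.
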